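(* Let $(\mathbb{V},\Omega)$ be a base-normed space with closed cone $K$ and base $\Omega$, and let $\Omega_o$ be a closed convex subset of $\Omega$. Then the cone $K_o=\{ta:a\in\Omega_o,t\ge0\}$ generated by $\Omega_o$ is closed. Moreover, if $\mathbb{V}$ is complete in its base norm, then $\mathbb{V}_o=K_o-K_o$ is complete in the base norm generated by $\Omega_o$.
   Context: A base-normed space $(\mathbb{V},\Omega)$: $\Omega$ is a convex subset of a real vector space such that every nonzero element of $K=\{t\alpha:t\ge0,\alpha\in\Omega\}$ has a unique representation $t\alpha$, $t>0$, $\alpha\in\Omega$ (equivalently there is a linear functional $u$ with $u\equiv1$ on $\Omega$); $\mathbb{V}=K-K$; and the Minkowski functional $\|x\|=\inf\{t\ge0:x\in t\,\mathrm{conv}(\Omega\cup-\Omega)\}$ is a norm (the base norm). Closedness refers to the base-norm topology of $\mathbb{V}$. The base norm generated by $\Omega_o$ on $\mathbb{V}_o$ is the Minkowski functional of $\mathrm{conv}(\Omega_o\cup-\Omega_o)$. *)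

From mathcomp Require Import all_boot all_order all_algebra.
From mathcomp Require Import boolp classical_sets reals.
Set Implicit Arguments. Unset Strict Implicit. Unset Printing Implicit Defensive.
Import Order.TTheory GRing.Theory Num.Theory.
Local Open Scope ring_scope.
Local Open Scope classical_set_scope.

Section BaseNorm.
Variables (R : realType) (V : lmodType R).

Definition convex_set (S : set V) : Prop :=
  forall x y (t : R), S x -> S y -> 0 <= t -> t <= 1 -> S (t *: x + (1 - t) *: y).

Definition conv (S : set V) : set V :=
  [set x | exists (n : nat) (l : 'I_n -> R) (p : 'I_n -> V),
     (forall i, 0 <= l i) /\ \sum_(i < n) l i = 1 /\ (forall i, S (p i)) /\
     x = \sum_(i < n) l i *: p i].

Definition cone (S : set V) : set V :=
  [set x | exists (t : R) (a : V), 0 <= t /\ S a /\ x = t *: a].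

Definition diffset (A : set V) : set V :=
  [set x | exists a b, A a /\ A b /\ x = a - b].

Definition minkowski (C : set V) (x : V) : R :=
  inf [set t : R | 0 <= t /\ exists c, C c /\ x = t *: c].

Definition base_norm (Om : set V) : V -> R :=
  minkowski (conv (Om `|` [set - a | a in Om])).

(* p is a (finite-valued) norm on V, where finiteness means the Minkowski
   infimum is over a nonempty set *)
Definition is_norm_on (W : set V) (C : set V) : Prop :=
  (forall x, W x -> exists t : R, 0 <= t /\ exists c, C c /\ x = t *: c) /\
  (forall x, W x -> minkowski C x = 0 -> x = 0) /\
  (forall (a : R) x, W x -> minkowski C (a *: x) = `|a| * minkowski C x) /\
  (forall x y, W x -> W y -> minkowski C (x + y) <= minkowski C x + minkowski C y).

Definition base_normed (Om : set V) : Prop :=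
  convex_set Om /\
  (forall k, cone Om k -> k != 0 ->
     exists! tp : R * V, 0 < tp.1 /\ Om tp.2 /\ k = tp.1 *: tp.2) /\
  (forall x : V, diffset (cone Om) x) /\
  is_norm_on setT (conv (Om `|` [set - a | a in Om])).

Definition closed_wrt (p : V -> R) (S : set V) : Prop :=
  forall x, ~ S x -> exists e : R, 0 < e /\ forall y, p (y - x) < e -> ~ S y.

Definition complete_wrt (p : V -> R) (W : set V) : Prop :=
  forall u : nat -> V, (forall n, W (u n)) ->
    (forall e : R, 0 < e -> exists N, forall m n, (N <= m)%N -> (N <= n)%N ->
        p (u m - u n) < e) ->
    exists x, W x /\ forall e : R, 0 < e -> exists N, forall n, (N <= n)%N ->
        p (u n - x) < e.

End BaseNorm.

From mathcomp Require Import all_boot all_order all_algebra.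
From mathcomp Require Import boolp classical_sets reals.
From mathcomp Require Import lra ring.
Set Implicit Arguments. Unset Strict Implicit. Unset Printing Implicit Defensive.
Import Order.TTheory GRing.Theory Num.Theory.
Local Open Scope ring_scope.
Local Open Scope classical_set_scope.

(* For a in Ω and t >= 0 the base norm ‖t a‖ is t, so ‖.‖ is additive on the
   cone K.  If x is not in K_o, then x / ‖x‖ is not in Ω_o; a point t a of K_o
   close to x has a close to x / ‖x‖, since ‖ ‖x‖ a - x ‖ <= 2 ‖t a - x‖.
   For completeness, an element of V_o with ‖.‖_o-norm below e is k - l with
   k, l in K_o and ‖k‖ + ‖l‖ < e.  Along a fast subsequence of a ‖.‖_o-Cauchy
   sequence the increments thus split into two series in K_o with geometrically
   decreasing norms; they converge in the complete space V, their tails stay in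
   the closed cone K_o, and this bounds the ‖.‖_o-distance to the limit. *)

Local Notation symm S := (S `|` [set - a | a in S]).

Section ConvexCone.
Variables (R : realType) (V : lmodType R) (S : set V).

Lemma cone_subset (T : set V) : S `<=` T -> cone S `<=` cone T.
Proof. by move=> ST _ [t [a [t0 [Sa ->]]]]; exists t, a; split; [|split; [apply: ST|]]. Qed.

Hypothesis convS : convex_set S.

Lemma conic_comb (l m : R) a b : 0 <= l -> 0 <= m -> S a -> S b ->
  exists2 c, S c & l *: a + m *: b = (l + m) *: c.
Proof.
move=> l0 m0 Sa Sb; have [lm0|lm_neq0] := eqVneq (l + m) 0.
  move/eqP: lm0; rewrite paddr_eq0 // => /andP[/eqP -> /eqP ->].
  by exists a; rewrite // !(scale0r, addr0).
have lm_gt0 : 0 < l + m by rewrite lt_def lm_neq0 addr_ge0.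
exists ((l / (l + m)) *: a + (1 - l / (l + m)) *: b).
  apply: convS => //; first by rewrite divr_ge0 // ltW.
  by rewrite ler_pdivrMr // mul1r lerDl.
by rewrite scalerDr !scalerA; congr (_ *: _ + _ *: _); field.
Qed.

Lemma coneD x y : cone S x -> cone S y -> cone S (x + y).
Proof.
move=> [s [a [s0 [Sa ->]]]] [t [b [t0 [Sb ->]]]].
have [c Sc ->] := conic_comb s0 t0 Sa Sb.
by exists (s + t), c; rewrite addr_ge0.
Qed.

Lemma cone_sum (I : Type) (r : seq I) (k : I -> V) : S !=set0 ->
  (forall i, cone S (k i)) -> cone S (\sum_(i <- r) k i).
Proof.
move=> [a Sa] kS; elim: r => [|i r IHr]; last by rewrite big_cons; apply: coneD.
by rewrite big_nil; exists 0, a; rewrite scale0r.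
Qed.

Lemma diffset_coneB x y :
  diffset (cone S) x -> diffset (cone S) y -> diffset (cone S) (x - y).
Proof.
move=> [k1 [l1 [Sk1 [Sl1 ->]]]] [k2 [l2 [Sk2 [Sl2 ->]]]].
exists (k1 + l2), (l1 + k2); do 2?split; try exact: coneD.
by rewrite opprB addrACA opprD (addrC (- l1)).
Qed.

Lemma conv_symm_sum a0 n (l : 'I_n -> R) (p : 'I_n -> V) : S a0 ->
  (forall i, 0 <= l i) -> (forall i, symm S (p i)) ->
  exists lam mu a b, [/\ 0 <= lam, 0 <= mu, lam + mu = \sum_(i < n) l i,
    S a /\ S b & \sum_(i < n) l i *: p i = lam *: a - mu *: b].
Proof.
move=> Sa0; elim: n l p => [|n IHn] l p l0 pS.
  by exists 0, 0, a0, a0; rewrite !big_ord0 !scale0r subr0 addr0.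
have [lam [mu [a [b [lam0 mu0 lsum [Sa Sb] psum]]]]] :=
  IHn (fun i => l (widen_ord (leqnSn n) i)) (fun i => p (widen_ord (leqnSn n) i))
      (fun i => l0 _) (fun i => pS _).
rewrite !big_ord_recr /= psum -lsum.
case: (pS ord_max) => [Sp|[c Sc <-]].
  have [w Sw Ew] := conic_comb lam0 (l0 ord_max) Sa Sp.
  exists (lam + l ord_max), mu, w, b; split; rewrite ?addr_ge0 //.
    by rewrite addrAC.
  by rewrite addrAC Ew.
have [w Sw Ew] := conic_comb mu0 (l0 ord_max) Sb Sc.
exists lam, (mu + l ord_max), a, w; split; rewrite ?addr_ge0 //.
  by rewrite addrA.
by rewrite -Ew scalerN opprD addrA.
Qed.

Lemma conv_symmP c : conv (symm S) c ->
  exists lam mu a b, [/\ 0 <= lam, 0 <= mu, lam + mu = 1, S a /\ S b &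
    c = lam *: a - mu *: b].
Proof.
move=> [n [l [p [l0 [l1 [pS ->]]]]]]; rewrite -l1.
have [a0 Sa0] : S !=set0.
  case: n l p l0 l1 pS => [|n] l p _ l1 pS.
    by move: l1; rewrite big_ord0 => /esym/eqP; rewrite oner_eq0.
  by case: (pS ord0) => [Sp|[a Sa _]]; [exists (p ord0)|exists a].
exact: conv_symm_sum Sa0 l0 pS.
Qed.

End ConvexCone.

Section Minkowski.
Variables (R : realType) (V : lmodType R).

Definition minkowski_set (C : set V) (x : V) : set R :=
  [set t | 0 <= t /\ exists c, C c /\ x = t *: c].

Lemma minkowski_le C x t : minkowski_set C x t -> minkowski C x <= t.
Proof. by move=> Ct; apply: ge_inf => //; exists 0 => s []. Qed.

Lemma minkowski_ge0 C x : minkowski_set C x !=set0 -> 0 <= minkowski C x.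
Proof. by move=> Cx; apply: lb_le_inf => // t []. Qed.

Lemma conv2 (C : set V) (t : R) a b : 0 <= t <= 1 -> C a -> C b ->
  conv C (t *: a + (1 - t) *: b).
Proof.
move=> /andP[t0 t1] Ca Cb.
exists 2%N, (fun i : 'I_2 => if val i == 0%N then t else 1 - t),
  (fun i : 'I_2 => if val i == 0%N then a else b).
split; first by move=> i; case: ifP; lra.
split; first by rewrite !big_ord_recl big_ord0 /=; lra.
split; first by move=> i; case: ifP.
by rewrite !big_ord_recl big_ord0 /= addr0.
Qed.

Lemma minkowski_set_diff (S : set V) (s r : R) a b : 0 <= s -> 0 <= r -> S a -> S b ->
  minkowski_set (conv (symm S)) (s *: a - r *: b) (s + r).
Proof.
move=> s0 r0 Sa Sb; split; first exact: addr_ge0.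
have [sr0|sr_neq0] := eqVneq (s + r) 0.
  move/eqP: sr0; rewrite paddr_eq0 // => /andP[/eqP -> /eqP ->].
  exists a; split; last by rewrite !(scale0r, addr0, subr0).
  have := @conv2 (symm S) 1 a a; rewrite subrr scale0r addr0 scale1r.
  by apply; rewrite ?ler01 ?lexx //; left.
have sr_gt0 : 0 < s + r by rewrite lt_def sr_neq0 addr_ge0.
exists ((s / (s + r)) *: a + (1 - s / (s + r)) *: - b); split.
  apply: conv2; [|by left|by right; exists b].
  by rewrite divr_ge0 ?(ltW sr_gt0) //= ler_pdivrMr // mul1r lerDl.
by rewrite scalerDr !scalerA scalerN; congr (_ *: _ - _ *: _); field.
Qed.

Lemma base_norm_le (S : set V) (s r : R) a b : 0 <= s -> 0 <= r -> S a -> S b ->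
  base_norm S (s *: a - r *: b) <= s + r.
Proof. by move=> s0 r0 Sa Sb; apply/minkowski_le/minkowski_set_diff. Qed.

End Minkowski.

Section BaseNormOfConvex.
Variables (R : realType) (V : lmodType R) (S : set V).
Hypothesis convS : convex_set S.
Local Notation W := (diffset (cone S)).
Local Notation bo := (base_norm S).

Lemma base_norm_lt_decomp x (e : R) : W x -> bo x < e ->
  exists s r a b, [/\ 0 <= s, 0 <= r, s + r < e, S a /\ S b & x = s *: a - r *: b].
Proof.
move=> [_ [_ [[s [a [s0 [Sa ->]]]] [[r [b [r0 [Sb ->]]]] ->]]]].
have ne := ex_intro _ _ (minkowski_set_diff s0 r0 Sa Sb).
move=> /(inf_lt ne) [t [t0 [c [/(conv_symmP convS) Hc ->]]] te].
have [lam [mu [a' [b' [lam0 mu0 lmu [Sa' Sb'] ->]]]]] := Hc.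
exists (t * lam), (t * mu), a', b'; split; rewrite ?mulr_ge0 //.
  by rewrite -mulrDr lmu mulr1.
by rewrite scalerBr !scalerA.
Qed.

Lemma base_normD_le x y : W x -> W y -> bo (x + y) <= bo x + bo y.
Proof.
move=> Wx Wy; apply/ler_addgt0Pr => e e0.
have [s [r [a [b [s0 r0 sr [Sa Sb] ex]]]]] :=
  base_norm_lt_decomp (e := bo x + e / 2) Wx ltac:(lra).
have [s' [r' [a' [b' [s0' r0' sr' [Sa' Sb'] ey]]]]] :=
  base_norm_lt_decomp (e := bo y + e / 2) Wy ltac:(lra).
have [c Sc Ec] := conic_comb convS s0 s0' Sa Sa'.
have [d Sd Ed] := conic_comb convS r0 r0' Sb Sb'.
have -> : x + y = (s + s') *: c - (r + r') *: d.
  by rewrite ex ey -Ec -Ed addrACA opprD.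
by apply: le_trans (base_norm_le _ _ Sc Sd) _; rewrite ?addr_ge0 //; lra.
Qed.

End BaseNormOfConvex.

Section HalfPowers.
Variable R : realType.

Lemma halfpow_lt (e : R) : 0 < e -> exists N, 2^-1 ^+ N < e.
Proof.
move=> e0; have := archi_boundP (ltW (eqbRL (invr_gt0 e) e0)).
set N := Num.bound _ => hN; exists N.
have N_lt : (N%:R : R) < (2 ^ N)%:R by rewrite ltr_nat ltn_expl.
have -> : (2^-1 : R) ^+ N = ((2 ^ N)%:R)^-1 by rewrite natrX -exprVn.
by rewrite invf_plt ?posrE ?ltr0n ?expn_gt0 // (lt_trans hN N_lt).
Qed.

Lemma sum_halfpow_le (m n : nat) : (m <= n)%N ->
  \sum_(m <= j < n) (2^-1 : R) ^+ j <= 2 * 2^-1 ^+ m.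
Proof.
move=> mn; rewrite (@telescope_sumr_eq _ _ _ (fun k => - (2 * (2^-1 : R) ^+ k))) //.
  have : 0 <= (2^-1 : R) ^+ n by rewrite exprn_ge0 // invr_ge0 ler0n.
  by rewrite opprK; lra.
by move=> k _; rewrite exprS; move: (2^-1 ^+ k) => y; lra.
Qed.

End HalfPowers.

Section Convergence.
Variables (R : realType) (V : lmodType R) (p : V -> R).

Definition cauchy_wrt (u : nat -> V) : Prop :=
  forall e : R, 0 < e -> exists N, forall m n, (N <= m)%N -> (N <= n)%N ->
    p (u m - u n) < e.

Definition cvg_wrt (u : nat -> V) (x : V) : Prop :=
  forall e : R, 0 < e -> exists N, forall n, (N <= n)%N -> p (u n - x) < e.

Lemma closed_wrt_cvg (C : set V) u x N : closed_wrt p C -> cvg_wrt u x ->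
  (forall n, (N <= n)%N -> C (u n)) -> C x.
Proof.
move=> closedC ux Cu; apply: contrapT => /closedC [e [e0 He]].
have [M HM] := ux e e0.
by apply: (He (u (maxn N M))); [apply: HM; rewrite leq_maxr | apply: Cu; rewrite leq_maxl].
Qed.

Lemma cauchy_fast_subseq u (eps : nat -> R) : (forall J, 0 < eps J) -> cauchy_wrt u ->
  exists phi : nat -> nat, {homo phi : i j / (i <= j)%N} /\
    forall J n, (phi J <= n)%N -> p (u n - u (phi J)) < eps J.
Proof.
move=> eps_gt0 uC; have /choice [Nf HNf] := fun J => uC _ (eps_gt0 J).
have Nf_le J : (Nf J <= \max_(i < J.+1) Nf i)%N.
  exact: (leq_bigmax (F := fun i : 'I_J.+1 => Nf i) ord_max).
exists (fun J => \max_(i < J.+1) Nf i); split.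
  move=> i j ij /=; apply/bigmax_leqP => k _.
  by have := leq_bigmax (F := fun k : 'I_j.+1 => Nf k) (@widen_ord i.+1 j.+1 ij k).
by move=> J n Jn; apply: HNf; apply: leq_trans (Nf_le J) _.
Qed.

End Convergence.

Section BaseNormedSpace.
Variables (R : realType) (V : lmodType R) (Om : set V).
Hypothesis bOm : base_normed Om.
Local Notation bn := (base_norm Om).

Lemma base_convex : convex_set Om.
Proof. by case: bOm. Qed.

Lemma base_nonempty : Om !=set0.
Proof.
by case: bOm => _ [_ [/(_ 0) [k [_ [[t [a [_ [Oa _]]]] _]]] _]]; exists a.
Qed.

Lemma base_normZ (a : R) x : bn (a *: x) = `|a| * bn x.
Proof. by case: bOm => _ [_ [_ [_ [_ [h _]]]]]; apply: h. Qed.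

Lemma ler_base_normD x y : bn (x + y) <= bn x + bn y.
Proof. by case: bOm => _ [_ [_ [_ [_ [_ h]]]]]; apply: h. Qed.

Lemma base_norm_eq0 x : bn x = 0 -> x = 0.
Proof. by case: bOm => _ [_ [_ [_ [h _]]]]; apply: h. Qed.

Lemma base_norm_ge0 x : 0 <= bn x.
Proof.
case: bOm => _ [_ [_ [/(_ x I) x_fin _]]].
apply: minkowski_ge0; have [t [t0 [c [Cc ->]]]] := x_fin.
by exists t; split=> //; exists c.
Qed.

Lemma base_normN x : bn (- x) = bn x.
Proof. by rewrite -scaleN1r base_normZ normrN1 mul1r. Qed.

Lemma ler_base_norm_dist x y : `|bn x - bn y| <= bn (x - y).
Proof.
have hx : bn x <= bn (x - y) + bn y by rewrite -{1}(subrK y x) ler_base_normD.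
have hy : bn y <= bn (x - y) + bn x.
  by rewrite -(base_normN (x - y)) opprB -{1}(subrK x y) ler_base_normD.
by rewrite ler_norml; apply/andP; split; lra.
Qed.

Lemma base_rep_uniq (s t : R) a b : 0 < s -> 0 <= t -> Om a -> Om b ->
  s *: a = t *: b -> s *: a != 0 -> s = t.
Proof.
move=> s_gt0 t0 Oa Ob sab nz.
have t_gt0 : 0 < t.
  by rewrite lt_def t0 andbT; apply: contraNneq nz => t_eq0; rewrite sab t_eq0 scale0r.
case: bOm => _ [/(_ (s *: a)) uniq _].
have [[s' a'] [_ U]] := uniq (ex_intro _ s (ex_intro _ a (conj (ltW s_gt0) (conj Oa erefl)))) nz.
have Ea := U (s, a) (conj s_gt0 (conj Oa erefl)).
have Eb := U (t, b) (conj t_gt0 (conj Ob sab)).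
by rewrite Ea in Eb; case: Eb.
Qed.

Lemma base_normed_trivial : Om 0 -> forall x : V, x = 0.
Proof.
move=> Om0.
have Om_eq0 a : Om a -> a = 0.
  move=> Oa; apply/eqP/negPn/negP => a_neq0.
  have Oa2 : Om (2^-1 *: a).
    by have := base_convex Oa Om0 (t := 2^-1); rewrite scaler0 addr0; apply; lra.
  have := @base_rep_uniq 1 2 a _ ltr01 (ler0n _ 2) Oa Oa2.
  by rewrite scalerA mulfV ?pnatr_eq0 // !scale1r => /(_ erefl a_neq0) h12; lra.
move=> x; case: bOm => _ [_ [/(_ x) [_ [_ [[t [a [_ [Oa ->]]]] [[s [b [_ [Ob ->]]]] ->]]]] _]].
by rewrite (Om_eq0 _ Oa) (Om_eq0 _ Ob) !scaler0 subr0.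
Qed.

Hypothesis Om_neq0 : ~ Om 0.

Lemma base_norm_base a : Om a -> bn a = 1.
Proof.
move=> Oa; have a_set := minkowski_set_diff ler01 (lexx 0) Oa Oa.
rewrite scale1r scale0r subr0 addr0 in a_set.
apply/eqP; rewrite eq_le minkowski_le //=.
apply: lb_le_inf; first by exists 1.
move=> t [t0 [c [Cc ac]]]; subst a.
have [lam [mu [b [b' [lam0 mu0 lmu [Ob Ob'] cE]]]]] := conv_symmP base_convex Cc.
subst c.
have tmu0 : 0 <= t * mu by rewrite mulr_ge0.
have [w Ow Ew] := conic_comb base_convex ler01 tmu0 Oa Ob'.
have w_neq0 : (1 + t * mu) *: w != 0.
  by rewrite scaler_eq0 negb_or gt_eqF ?ltr_pwDl //=; apply: contra_notN Om_neq0 => /eqP <-.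
have E : (1 + t * mu) *: w = (t * lam) *: b.
  by rewrite -Ew scale1r scalerBr !scalerA subrK.
have := base_rep_uniq (ltr_pwDl ltr01 tmu0) (mulr_ge0 t0 lam0) Ow Ob E w_neq0.
have : t = t * lam + t * mu by rewrite -mulrDr lmu mulr1.
lra.
Qed.

Lemma base_norm_cone (t : R) a : 0 <= t -> Om a -> bn (t *: a) = t.
Proof. by move=> t0 Oa; rewrite base_normZ base_norm_base // mulr1 ger0_norm. Qed.

Lemma base_normD_cone k l : cone Om k -> cone Om l -> bn (k + l) = bn k + bn l.
Proof.
move=> [s [a [s0 [Oa ->]]]] [t [b [t0 [Ob ->]]]].
have [c Oc ->] := conic_comb base_convex s0 t0 Oa Ob.
by rewrite !base_norm_cone // addr_ge0.
Qed.

Lemma base_norm_sum_cone (I : Type) (r : seq I) (k : I -> V) :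
  (forall i, cone Om (k i)) -> bn (\sum_(i <- r) k i) = \sum_(i <- r) bn (k i).
Proof.
move=> kK; elim: r => [|i r IHr].
  by rewrite !big_nil -(scale0r 0) base_normZ normr0 mul0r.
by rewrite !big_cons base_normD_cone ?IHr //; exact: (cone_sum base_convex _ base_nonempty kK).
Qed.

Lemma base_norm_cvg_le u x y (c : R) N : cvg_wrt bn u x ->
  (forall n, (N <= n)%N -> bn (u n - y) <= c) -> bn (x - y) <= c.
Proof.
move=> ux uy; apply/ler_addgt0Pr => e e0; have [M HM] := ux e e0.
set n := maxn N M; have hy := uy n (leq_maxl N M).
have := HM n (leq_maxr N M); rewrite -base_normN opprB => hx.
have -> : x - y = (x - u n) + (u n - y) by rewrite addrA subrK.
by apply: le_trans (ler_base_normD _ _) _; lra.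
Qed.

Lemma base_norm_radial_le (t : R) a x : 0 <= t -> Om a ->
  bn (bn x *: a - x) <= 2 * bn (t *: a - x).
Proof.
move=> t0 Oa.
have -> : bn x *: a - x = (bn x - t) *: a + (t *: a - x).
  by rewrite scalerBl addrA subrK.
apply: le_trans (ler_base_normD _ _) _.
rewrite base_normZ (base_norm_base Oa) mulr1.
have := ler_base_norm_dist x (t *: a).
by rewrite (base_norm_cone t0 Oa) -(base_normN (x - _)) opprB; lra.
Qed.

End BaseNormedSpace.

Section SubBase.
Variables (R : realType) (V : lmodType R) (Om Omo : set V).
Hypotheses (bOm : base_normed Om) (Om_neq0 : ~ Om 0) (sub : Omo `<=` Om).
Local Notation bn := (base_norm Om).
Local Notation bo := (base_norm Omo).

Lemma cone_closed : closed_wrt bn Omo -> closed_wrt bn (cone Omo).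
Proof.
move=> closedO x Kx.
have [[a0 Oa0]|Omo0] := pselect (Omo !=set0); last first.
  by exists 1; split=> // y _ [t [a [_ [Oa _]]]]; apply: Omo0; exists a.
have bx_gt0 : 0 < bn x.
  rewrite lt_def base_norm_ge0 // andbT; apply/eqP => /(base_norm_eq0 bOm) x0.
  by apply: Kx; exists 0, a0; rewrite x0 scale0r.
have bx_neq0 : bn x != 0 by rewrite gt_eqF.
have [|e [e0 He]] := closedO ((bn x)^-1 *: x).
  by move=> Oz; apply: Kx; exists (bn x), ((bn x)^-1 *: x); rewrite scalerA divff ?scale1r ?ltW.
exists (e * bn x / 2); split; first by rewrite divr_gt0 ?mulr_gt0.
move=> y ye [t [a [t0 [Oa yE]]]]; rewrite {y}yE in ye; apply: (He a _ Oa).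
have := base_norm_radial_le bOm Om_neq0 x t0 (sub Oa).
have -> : bn x *: a - x = bn x *: (a - (bn x)^-1 *: x).
  by rewrite scalerBr scalerA divff ?scale1r.
rewrite base_normZ // gtr0_norm // => h.
rewrite -(ltr_pM2l bx_gt0); apply: le_lt_trans h _.
lra.
Qed.

Lemma base_norm_cone_diff_le k l : cone Omo k -> cone Omo l -> bo (k - l) <= bn k + bn l.
Proof.
move=> [s [a [s0 [Oa ->]]]] [t [b [t0 [Ob ->]]]].
rewrite (base_norm_cone bOm Om_neq0 s0 (sub Oa)) (base_norm_cone bOm Om_neq0 t0 (sub Ob)).
exact: base_norm_le.
Qed.

Hypothesis convOmo : convex_set Omo.

Lemma base_norm_cone_diff_lt x (e : R) : diffset (cone Omo) x -> bo x < e ->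
  exists kl : V * V, [/\ cone Omo kl.1, cone Omo kl.2, x = kl.1 - kl.2 & bn kl.1 + bn kl.2 < e].
Proof.
move=> /base_norm_lt_decomp Wx /(Wx convOmo) [s [r [a [b [s0 r0 sr [Oa Ob] ->]]]]].
exists (s *: a, r *: b); split=> //; try by [exists s, a | exists r, b].
by rewrite (base_norm_cone bOm Om_neq0 s0 (sub Oa)) (base_norm_cone bOm Om_neq0 r0 (sub Ob)).
Qed.

End SubBase.

Section Completeness.
Variables (R : realType) (V : lmodType R) (Om Omo : set V).
Hypotheses (bOm : base_normed Om) (Om_neq0 : ~ Om 0) (sub : Omo `<=` Om)
  (convOmo : convex_set Omo) (closedK : closed_wrt (base_norm Om) (cone Omo))
  (complete : complete_wrt (base_norm Om) setT).
Local Notation bn := (base_norm Om).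
Local Notation bo := (base_norm Omo).
Local Notation W := (diffset (cone Omo)).

Lemma cone_series (k : nat -> V) : (forall j, cone Omo (k j)) ->
  (forall j, bn (k j) <= 2^-1 ^+ j) ->
  exists P, forall J, cone Omo (P - \sum_(j < J) k j) /\
    bn (P - \sum_(j < J) k j) <= 2 * 2^-1 ^+ J.
Proof.
move=> kK kb; pose S n := \sum_(j < n) k j.
have Omo_nonempty : Omo !=set0 by case: (kK 0%N) => t [a [_ [Oa _]]]; exists a.
have tail m n : (m <= n)%N -> cone Omo (S n - S m) /\ bn (S n - S m) <= 2 * 2^-1 ^+ m.
  move=> mn; have -> : S n - S m = \sum_(m <= j < n) k j.
    by rewrite /S -!(big_mkord xpredT k) (@big_cat_nat _ _ _ m 0 n) // addrAC subrr add0r.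
  split; first exact: cone_sum.
  rewrite base_norm_sum_cone //; last by move=> j; exact: cone_subset sub _ (kK j).
  by apply: le_trans (sum_halfpow_le _ mn); apply: ler_sum.
have cauchyS : cauchy_wrt bn S.
  move=> e e0; have [N HN] := @halfpow_lt R (e / 2) ltac:(lra).
  have tailN m n : (N <= m)%N -> (m <= n)%N -> bn (S n - S m) < e.
    move=> Nm /tail [_ h]; have : (2^-1 : R) ^+ m <= 2^-1 ^+ N.
      by apply: ler_wiXn2l => //; lra.
    lra.
  exists N => m n Nm Nn; have [mn|/ltnW nm] := leqP m n; last exact: tailN.
  by rewrite -(base_normN bOm) opprB; apply: tailN.
have [P [_ SP]] := complete (fun=> I) cauchyS.
exists P => J; split.
  apply: (closed_wrt_cvg closedK (N := J)) (fun n Jn => (tail J n Jn).1).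
  by move=> e /SP [N HN]; exists N => n /HN; rewrite opprB addrA subrK.
exact: base_norm_cvg_le SP (fun n Jn => (tail J n Jn).2).
Qed.

Lemma cone_diffs_cvg (v k l : nat -> V) : W (v 0%N) ->
  (forall j, cone Omo (k j) /\ cone Omo (l j)) ->
  (forall j, bn (k j) + bn (l j) <= 2^-1 ^+ j) ->
  (forall j, v j.+1 - v j = k j - l j) ->
  exists2 x, W x & forall J, W (v J - x) /\ bo (v J - x) <= 4 * 2^-1 ^+ J.
Proof.
move=> Wv0 klK kl_le dv.
have k_le j : bn (k j) <= 2^-1 ^+ j.
  by have := kl_le j; have := base_norm_ge0 bOm (l j); lra.
have l_le j : bn (l j) <= 2^-1 ^+ j.
  by have := kl_le j; have := base_norm_ge0 bOm (k j); lra.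
have [P HP] := cone_series (fun j => (klK j).1) k_le.
have [Q HQ] := cone_series (fun j => (klK j).2) l_le.
have PK : cone Omo P by have [] := HP 0%N; rewrite big_ord0 subr0.
have QK : cone Omo Q by have [] := HQ 0%N; rewrite big_ord0 subr0.
exists (v 0%N + (P - Q)).
  by rewrite -(opprB Q P); apply: diffset_coneB => //; exists Q, P.
move=> J; have [PJK PJb] := HP J; have [QJK QJb] := HQ J.
have vJ : v J = v 0%N + (\sum_(j < J) k j - \sum_(j < J) l j).
  apply/eqP; rewrite addrC -subr_eq -sumrB -(big_mkord xpredT (fun j => k j - l j)).
  by rewrite -(@telescope_sumr _ 0 J v) //; apply/eqP/eq_bigr => j _.
have -> : v J - (v 0%N + (P - Q)) = (Q - \sum_(j < J) l j) - (P - \sum_(j < J) k j).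
  by rewrite vJ (addrC (v _)) addrKA !opprB addrACA [RHS]addrACA (addrC (\sum_(j < J) k j)).
split; first by exists (Q - \sum_(j < J) l j), (P - \sum_(j < J) k j).
by have := base_norm_cone_diff_le bOm Om_neq0 sub QJK PJK; lra.
Qed.

Lemma diffset_cone_complete : complete_wrt bo W.
Proof.
move=> u uW uC.
have half_pow_gt0 J : 0 < (2^-1 : R) ^+ J by rewrite exprn_gt0 // invr_gt0 ltr0n.
have [phi [phi_mono phiP]] := cauchy_fast_subseq half_pow_gt0 uC.
have /choice [kl klP] := fun j => base_norm_cone_diff_lt bOm Om_neq0 sub convOmo
  (diffset_coneB convOmo (uW _) (uW _)) (phiP j _ (phi_mono _ _ (leqnSn j))).
have [x Wx ux] : exists2 x, W x & forall J,
    W (u (phi J) - x) /\ bo (u (phi J) - x) <= 4 * 2^-1 ^+ J.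
  apply: (@cone_diffs_cvg (u \o phi) (fun j => (kl j).1) (fun j => (kl j).2) (uW _))
    => j; have [kK lK dj klj] := klP j; by [split | apply: ltW | ].
exists x; split=> // e e0; have [J HJ] := @halfpow_lt R (e / 5) ltac:(lra).
exists (phi J) => n Jn; have [WJ uJ] := ux J.
rewrite -[u n](subrK (u (phi J))) -addrA.
apply: le_lt_trans (base_normD_le convOmo (diffset_coneB convOmo (uW _) (uW _)) WJ) _.
by have := phiP J n Jn; lra.
Qed.

End Completeness.

Theorem lemmaC9 (R : realType) (V : lmodType R) (Om Omo : set V) :
  base_normed Om ->
  closed_wrt (base_norm Om) (cone Om) ->
  Omo `<=` Om -> convex_set Omo -> closed_wrt (base_norm Om) Omo ->
  closed_wrt (base_norm Om) (cone Omo) /\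
  (complete_wrt (base_norm Om) setT ->
   complete_wrt (base_norm Omo) (diffset (cone Omo))).
Proof.
move=> bOm _ sub convOmo closedO.
have [Om0|Om_neq0] := pselect (Om 0).
  have eq0 := base_normed_trivial bOm Om0.
  split=> [x Kx|_ u uW uC]; first by exists 1; split=> // y _; rewrite (eq0 y) -(eq0 x).
  exists (u 0%N); split=> // e /uC [N HN]; exists N => n Nn.
  by rewrite (eq0 (u n - _)) -(eq0 (u N - u N)); apply: HN.
have closedK := cone_closed bOm Om_neq0 sub closedO.
split=> // complete; exact: diffset_cone_complete bOm Om_neq0 sub convOmo closedK complete.
Qed.
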